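(* Let $V$ be a finite totally ordered set and let $w$ be a derangement of $V$ (a fixed-point-free permutation of $V$). Then: (a) For distinct $t, t' \in U(w)$, the sets $E_{w,t}$ and $E_{w,t'}$ are disjoint. (b) If $s \in V$ is minimal (with respect to the order on $V$) in its $w$-cycle, then $E_{w,w(s)} \subseteq E_{w,s}$.
   Context: For a permutation $w$ of a finite totally ordered set $V$ and $t \in V$, define $\rho_w(t) = \{t, w(t), \ldots, w^{k-1}(t)\}$, where $k$ is the smallest positive integer with $w^k(t) \le t$, and define $\lambda_w(t) = w^{-\ell}(t)$, where $\ell$ is the smallest positive integer with $w^{-\ell}(t) \le t$. Define $E_{w,t} = \{\{\lambda_w(t), s\} : s \in \rho_w(t)\}$ (a set of 2-element subsets of $V$, i.e. potential edges of a graph on $V$). Let $U(w)$ denote the set of elements of $V$ that are not the minimal element of their $w$-cycle. *)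

From mathcomp Require Import all_boot all_order all_fingroup.
Set Implicit Arguments. Unset Strict Implicit. Unset Printing Implicit Defensive.
Import Order.TTheory.
Local Open Scope order_scope.

Section Defs.
Context {d : Order.disp_t} {T : finOrderType d}.

Lemma first_return_ex (f : {perm T}) (t : T) :
  exists n, (0 < n)%N && ((f ^+ n)%g t <= t).
Proof. by exists #[f]%g; rewrite order_gt0 expg_order perm1 lexx. Qed.

Definition first_return (f : {perm T}) (t : T) : nat := ex_minn (first_return_ex f t).

Definition rho (w : {perm T}) (t : T) : {set T} :=
  [set (w ^+ i)%g t | i : 'I_(first_return w t)].

Definition lam (w : {perm T}) (t : T) : T :=
  ((w^-1) ^+ first_return (w^-1)%g t)%g t.

Definition Eset (w : {perm T}) (t : T) : {set {set T}} :=
  [set [set lam w t; s] | s in rho w t].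

Definition Uset (w : {perm T}) : {set T} :=
  [set t | ~~ [forall x in porbit w t, t <= x]].

End Defs.

From mathcomp Require Import all_boot all_order all_fingroup.
Import Order.TTheory.
Set Implicit Arguments. Unset Strict Implicit. Unset Printing Implicit Defensive.
Local Open Scope order_scope.

(* Going backwards along the cycle from [s ∈ ρ_w(t)], one passes through [t]
   and then reaches [λ_w(t)], every element met before [λ_w(t)] being [≥ t].
   For [t ∈ U(w)] we have [λ_w(t) < t], so an edge [{λ_w(t), s}] determines
   both of its endpoints, and [t] is recovered as the minimum of that backward
   path; hence distinct [t, t'] have disjoint edge sets.  If [s] is minimal in
   its cycle, then [λ_w(s) = λ_w(w s) = s] and [ρ_w(s)] is the whole cycle,
   which contains [ρ_w(w s)]. *)

Section CycleEdges.
Context {d : Order.disp_t} {T : finOrderType d}.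
Implicit Types (f w : {perm T}) (s t x : T).
Local Open Scope group_scope.
Local Open Scope order_scope.

Lemma first_returnP f t : let k := first_return f t in
  [/\ (0 < k)%N, (f ^+ k) t <= t & forall j, (0 < j < k)%N -> t < (f ^+ j) t].
Proof.
rewrite /first_return; case: ex_minnP => k /andP[k0 hk] hmin.
split=> // j /andP[j0 jk]; rewrite ltNge; apply: contraTN jk => hj.
by rewrite -leqNgt hmin // j0 hj.
Qed.

Lemma first_return_min f t m : (m < first_return f t)%N -> t <= (f ^+ m) t.
Proof.
case: (posnP m) => [-> _|m0 mk]; first by rewrite expg0 perm1.
by have [_ _ /(_ m)] := first_returnP f t; rewrite m0 mk => /(_ isT)/ltW.
Qed.

Lemma first_return_eq1 f t : f t <= t -> first_return f t = 1%N.
Proof.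
move=> ft; rewrite /first_return; case: ex_minnP => k /andP[k0 _] hmin.
by apply/eqP; rewrite eqn_leq k0 andbT hmin // expg1 ft.
Qed.

Lemma porbit_period f x k : (0 < k)%N -> (f ^+ k) x = x ->
  porbit f x = [set (f ^+ i) x | i : 'I_k].
Proof.
move=> k0 fix_x; apply/setP=> y; apply/porbitP/imsetP=> [[i ->]|[i _ ->]].
  exists (Ordinal (ltn_pmod i k0)) => //=.
  by rewrite {1}(divn_eq i k) expgD permM mulnC expgM (permX_fix _ fix_x).
by exists i.
Qed.

Lemma rho_sub_porbit w t : rho w t \subset porbit w t.
Proof. by apply/subsetP=> _ /imsetP[i _ ->]; apply: mem_porbit. Qed.

Lemma rho_ge w t s : s \in rho w t -> t <= s.
Proof. by case/imsetP=> i _ ->; apply/first_return_min. Qed.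

Lemma lam_lt w t : t \in Uset w -> lam w t < t.
Proof.
have [l0 hl _] := first_returnP w^-1 t.
rewrite inE /lam lt_neqAle hl andbT; apply: contraNN => /eqP fix_t.
apply/forall_inP=> x; rewrite -porbitV (porbit_period l0 fix_t).
by case/imsetP=> j _ ->; apply/first_return_min.
Qed.

Lemma rho_backward_path w t s : s \in rho w t ->
  exists i N, [/\ (i < N)%N, (w^-1 ^+ i) s = t, (w^-1 ^+ N) s = lam w t
    & forall j, (j < N)%N -> t <= (w^-1 ^+ j) s].
Proof.
have back m y : (w^-1 ^+ m) ((w ^+ m) y) = y by rewrite expgVn permK.
have [l0 _ _] := first_returnP w^-1 t.
case/imsetP=> -[i ik] _ -> /=; exists i, (i + first_return w^-1 t)%N.
split; first by rewrite -{1}(addn0 i) ltn_add2l.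
- exact: back.
- by rewrite expgD permM back.
move=> j jN; case: (leqP j i) => ji.
  rewrite -(subnK ji) expgD permM back; apply: first_return_min.
  by rewrite (leq_ltn_trans (leq_subr _ _) ik).
rewrite -(subnKC (ltnW ji)) expgD permM back; apply: first_return_min.
by rewrite ltn_subLR // ltnW.
Qed.

Lemma eq_set2_lt (a b c e : T) :
  a < b -> c < e -> [set a; b] = [set c; e] -> a = c /\ b = e.
Proof.
move=> ab ce E.
have /set2P[ac|ae] : a \in [set c; e] by rewrite -E set21.
  have /set2P[bc|//] : b \in [set c; e] by rewrite -E set22.
  by move: ab; rewrite ac bc ltxx.
have /set2P[ca|cb] : c \in [set a; b] by rewrite E set21.
  by move: ce; rewrite ca ae ltxx.
by move: ce; rewrite cb -ae => /(lt_trans ab); rewrite ltxx.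
Qed.

Lemma Eset_disjoint w t t' : t \in Uset w -> t' \in Uset w -> t != t' ->
  [disjoint Eset w t & Eset w t'].
Proof.
move=> tU t'U /eqP neq_tt'.
rewrite disjoint_subset; apply/subsetP=> _ /imsetP[s hs ->].
rewrite inE; apply/negP=> /imsetP[s' hs' E].
have [ea es] := eq_set2_lt (lt_le_trans (lam_lt tU) (rho_ge hs))
  (lt_le_trans (lam_lt t'U) (rho_ge hs')) E.
subst s'.
have [i [N [iN hi hN ht]]] := rho_backward_path hs.
have [i' [N' [iN' hi' hN' ht']]] := rho_backward_path hs'.
have first_hit M M' c : lam w t < c ->
    (forall j, (j < M)%N -> c <= (w^-1 ^+ j) s) ->
    (w^-1 ^+ M') s = lam w t -> (M <= M')%N.
  move=> ac hc hM'; rewrite leqNgt; apply/negP=> /hc.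
  by rewrite hM' => /(lt_le_trans ac); rewrite ltxx.
have eN : N = N'.
  apply/anti_leq; rewrite (first_hit N N' t) ?lam_lt //; last by rewrite ea.
  by rewrite (first_hit N' N t') // ea lam_lt.
apply: neq_tt'; apply/le_anti/andP; split.
- by rewrite -hi' ht // eN.
- by rewrite -hi ht' // -eN.
Qed.

Section CycleMinimum.
Variables (w : {perm T}) (s : T).
Hypothesis s_min : forall x, x \in porbit w s -> s <= x.

Lemma lam_cycle_min : lam w s = s.
Proof.
have [_ hl _] := first_returnP w^-1 s.
by apply/le_anti; rewrite hl s_min // -porbitV mem_porbit.
Qed.

Lemma lam_succ_cycle_min : lam w (w s) = s.
Proof.
rewrite /lam first_return_eq1 ?expg1 permK //.
by apply: s_min; have := mem_porbit w 1 s; rewrite expg1.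
Qed.

Lemma rho_cycle_min : rho w s = porbit w s.
Proof.
have [k0 hk _] := first_returnP w s.
by rewrite (porbit_period k0) //; apply/le_anti; rewrite hk s_min ?mem_porbit.
Qed.

Lemma Eset_succ_cycle_min : Eset w (w s) \subset Eset w s.
Proof.
rewrite /Eset lam_cycle_min lam_succ_cycle_min rho_cycle_min; apply: imsetS.
by have := porbit_perm w 1 s; rewrite expg1 => <-; apply: rho_sub_porbit.
Qed.

End CycleMinimum.
End CycleEdges.

Theorem lemma3p4 (d : Order.disp_t) (T : finOrderType d) (w : {perm T})
    (hder : forall x : T, w x != x) :
  (forall t t' : T, t \in Uset w -> t' \in Uset w -> t != t' ->
     [disjoint Eset w t & Eset w t'])
  /\
  (forall s : T, (forall x, x \in porbit w s -> s <= x) ->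
     Eset w (w s) \subset Eset w s).
Proof.
by split=> [t t'|s]; [apply: Eset_disjoint | apply: Eset_succ_cycle_min].
Qed.
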